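(* Let $p$ be a prime, let $r$ be a positive integer, let $V\subseteq\mathbb{Z}_p^r$, and let $S\subseteq\mathbb{N}$ be an infinite subset. For each $1\le k\le r$ let $P_k\in\mathbb{Z}_p\langle z\rangle$, and define $P\colon S\to\mathbb{Z}_p^r$ by $P(n)=(P_1(n),\dots,P_r(n))$. Suppose that for every $y\in\mathbb{Z}_p^r\setminus V$ the set $\{n\in S\colon P(n)=y\}$ is empty, and for every $y\in V$ the set $\{n\in S\colon P(n)=y\}$ is finite. Then there exists $N\ge 0$ such that $$|\{n\in S\colon P(n)=y\}|\le N$$ for all $y\in V$.
   Context: $\mathbb{Q}_p\langle z\rangle$ denotes the ring of strictly convergent power series $\sum_{n\ge0}a_nz^n\in\mathbb{Q}_p[[z]]$ with $|a_n|_p\to0$; the Gauss norm is $|\sum a_nz^n|_{\rm Gauss}=\max_n|a_n|_p$, and $\mathbb{Z}_p\langle z\rangle$ is the subring of elements of Gauss norm at most $1$ (i.e. with all $a_n\in\mathbb{Z}_p$). Such series converge on $\mathbb{Z}_p$, so $P_k(n)$ is defined for $n\in\mathbb{N}$. Here $\mathbb{N}=\{0,1,2,\dots\}$. *)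

From mathcomp Require Import all_boot.
Set Implicit Arguments. Unset Strict Implicit. Unset Printing Implicit Defensive.

(* A p-adic integer x in Z_p is represented by its sequence of residues:
   x k = (x mod p^k) in [0, p^k), with compatibility x k = x (k+1) mod p^k.
   Two p-adic integers are equal iff their residue sequences are equal. *)
Definition is_Zp (p : nat) (x : nat -> nat) : Prop :=
  forall k, x k < p ^ k /\ x k = x k.+1 %% p ^ k.

(* An element sum_m a_m z^m of Z_p<z>: coefficients a m in Z_p with
   |a_m|_p -> 0, i.e. for every k, a_m = 0 mod p^k for all large m. *)
Definition is_ZpTate (p : nat) (a : nat -> nat -> nat) : Prop :=
  (forall m, is_Zp p (a m)) /\
  (forall k, exists M, forall m, M <= m -> a m k = 0).

(* "a(n) = y": the p-adically convergent series sum_m a_m n^m equals y,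
   i.e. modulo each p^k the partial sums stabilise at y k. *)
Definition ps_eval_is (p : nat) (a : nat -> nat -> nat) (n : nat)
    (y : nat -> nat) : Prop :=
  forall k, exists M, forall M', M <= M' ->
    y k = (\sum_(m < M') a m k * n ^ m) %% p ^ k.

Definition fiber (p r : nat) (P : 'I_r -> nat -> nat -> nat) (S : nat -> Prop)
    (y : 'I_r -> nat -> nat) (n : nat) : Prop :=
  S n /\ forall i, ps_eval_is p (P i) n (y i).

Definition is_Zp_vec (p r : nat) (y : 'I_r -> nat -> nat) : Prop :=
  forall i, is_Zp p (y i).

Definition finite_set (A : nat -> Prop) : Prop :=
  exists s : seq nat, forall n, A n -> n \in s.

Definition card_le (A : nat -> Prop) (N : nat) : Prop :=
  forall s : seq nat, uniq s -> (forall n, n \in s -> A n) -> size s <= N.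

Definition infinite_set (A : nat -> Prop) : Prop :=
  forall m, exists n, m <= n /\ A n.

From mathcomp Require Import all_boot all_algebra zify.
From Stdlib Require Import Classical.
Import GRing.Theory.
Set Implicit Arguments. Unset Strict Implicit. Unset Printing Implicit Defensive.

(* Suppose first that some component P_i has a coefficient
   a_m0 (m0 > 0) that is nonzero modulo some p^k, and let M be such that
   a_m = 0 mod p^k for all m >= M.  Then every fibre has at most M points.
   Indeed, let n_1 < ... < n_t be distinct points of a fibre, all < p^D, and
   put L = k + t*D.  Modulo p^L the value P_i(n_j) is the value of the integer
   polynomial F = sum_(m < N) a_m z^m - y_i (N large), so every n_j is a root
   of F modulo p^L.  Dividing out the roots one at a time (each division by
   n - n_j loses at most a factor p^D, since |n - n_j| < p^D) shows that F
   reduced modulo p^k has degree >= t, while its degree is < M by choice of M.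
   Otherwise every P_i is a constant series, so P is constant on S; its unique
   value y_0 has infinite fibre S, which contradicts the hypotheses whether
   y_0 lies in V or not. *)

(* If p^(a+D) divides u*X and 0 < u < p^D, then p^a divides X: the factor u
   can absorb at most D - 1 factors of p. *)
Lemma dvdn_pexp_cancel (p a D u X : nat) : prime p ->
  p ^ (a + D) %| u * X -> 0 < u -> u < p ^ D -> p ^ a %| X.
Proof.
move=> pp hd u0 uD; have p1 := prime_gt1 pp.
have [->|X0] := posnP X; first by rewrite dvdn0.
rewrite pfactor_dvdn ?muln_gt0 ?u0 // lognM // in hd.
have lu : logn p u < D.
  rewrite -(ltn_exp2l _ _ p1); apply: leq_ltn_trans uD.
  by apply: dvdn_leq => //; rewrite pfactor_dvdn.
by rewrite pfactor_dvdn //; lia.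
Qed.

Lemma Zp_residue_mod (p : nat) (x : nat -> nat) (k L : nat) :
  is_Zp p x -> k <= L -> x L %% p ^ k = x k.
Proof.
move=> hx /subnKC <-; elim: (L - k) => [|d IH].
  by rewrite addn0 modn_small //; case: (hx k).
rewrite addnS -IH; have [_ ->] := hx (k + d).
by rewrite modn_dvdm // dvdn_exp2l // leq_addr.
Qed.

Lemma eventually_all (E : nat -> nat -> Prop) (s : seq nat) :
  (forall x, x \in s -> exists M, forall M', M <= M' -> E x M') ->
  exists M, forall x, x \in s -> forall M', M <= M' -> E x M'.
Proof.
elim: s => [|x s IH] ev; first by exists 0.
have [M1 h1] := ev x (mem_head _ _).
have [M2 h2] : exists M, forall y, y \in s -> forall M', M <= M' -> E y M'.
  by apply: IH => y ys; apply: ev; rewrite inE ys orbT.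
exists (maxn M1 M2) => y; rewrite inE => /orP[/eqP ->|ys] M';
  rewrite geq_max => /andP[le1 le2]; [exact: h1 | exact: h2].
Qed.

Lemma infinite_not_finite (A : nat -> Prop) : infinite_set A -> ~ finite_set A.
Proof.
move=> infA [s sA]; have [n [le_n An]] := infA (\max_(x <- s) x).+1.
by have := @leq_bigmax_seq _ _ xpredT id n (sA n An) isT; rewrite leqNgt le_n.
Qed.

Lemma constant_series_eval (p : nat) (a : nat -> nat -> nat) (n : nat) :
  is_Zp p (a 0) -> (forall m k, 0 < m -> a m k = 0) -> ps_eval_is p a n (a 0).
Proof.
move=> a0 const k; exists 1 => -[|M'] // _.
rewrite big_ord_recl expn0 muln1 big1 ?addn0 => [|m _]; last by rewrite const.
by rewrite modn_small //; case: (a0 k).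
Qed.

Section ReductionModPrimePowers.
Local Open Scope ring_scope.

Lemma dvdz_pexp_cancel (p a D : nat) (u X : int) : prime p ->
  ((p ^ (a + D))%:Z %| u * X)%Z -> u != 0 -> (`|u| < p ^ D)%N ->
  ((p ^ a)%:Z %| X)%Z.
Proof.
move=> pp; rewrite !dvdzE abszM => hd u0; apply: (dvdn_pexp_cancel pp hd).
by rewrite absz_gt0.
Qed.

Lemma intr_Zp_eq0 (m : nat) (z : int) : (1 < m)%N -> ((m%:Z) %| z)%Z ->
  (z%:~R : 'Z_m) = 0.
Proof.
move=> m1 /dvdzP [q ->]; rewrite intrM.
suff -> : ((m%:Z)%:~R : 'Z_m) = 0 by rewrite mulr0.
by apply: val_inj => /=; rewrite [LHS](val_Zp_nat m1) modnn.
Qed.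

Lemma natr_Zp_eq0 (m n : nat) : (1 < m)%N -> ((n%:R : 'Z_m) == 0) = (m %| n)%N.
Proof.
by move=> m1; rewrite -val_eqE /= (val_Zp_nat m1) -/(dvdn m n).
Qed.

Definition poly_mod (m : nat) (Q : {poly int}) : {poly 'Z_m} := map_poly intr Q.

(* Each root is factored out over Z, and
   the quotient keeps roots modulo p^(k + (t-1)*D) at the remaining points. *)
Lemma deep_roots_bound (p k D : nat) (xs : seq nat) (Q : {poly int}) :
  prime p -> (1 < p ^ k)%N -> uniq xs -> (forall x, x \in xs -> (x < p ^ D)%N) ->
  (forall x, x \in xs -> ((p ^ (k + size xs * D))%:Z %| Q.[x%:Z])%Z) ->
  poly_mod (p ^ k) Q != 0 -> (size xs < size (poly_mod (p ^ k) Q))%N.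
Proof.
move=> pp pk1; elim: xs Q => [|x0 xs IH] Q /=; first by rewrite lt0n size_poly_eq0.
move=> /andP[x0xs uxs] small roots nzQ.
have x0in : x0 \in x0 :: xs by rewrite mem_head.
have /factor_theorem [q defq] : root (Q - (Q.[x0%:Z])%:P) x0%:Z.
  by rewrite rootE !hornerE subrr.
have modQ : poly_mod (p ^ k) Q = poly_mod (p ^ k) q * ('X - (x0%:R)%:P).
  have Qx0 : (Q.[x0%:Z]%:~R : 'Z_(p ^ k)) = 0.
    apply: intr_Zp_eq0 => //; apply: dvdz_trans (roots _ x0in).
    by rewrite dvdzE /= dvdn_exp2l // leq_addr.
  have -> : Q = q * ('X - (x0%:Z)%:P) + (Q.[x0%:Z])%:P by rewrite -defq subrK.
  by rewrite /poly_mod rmorphD rmorphM /= map_polyXsubC !map_polyC /= Qx0 addr0.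
have nzq : poly_mod (p ^ k) q != 0.
  by apply: contraNneq nzQ => q0; rewrite modQ q0 mul0r.
rewrite modQ size_Mmonic ?monicXsubC // size_XsubC addn2 ltnS.
apply: IH => // [x xxs|x xxs]; first by apply: small; rewrite inE xxs orbT.
have xin : x \in x0 :: xs by rewrite inE xxs orbT.
have diff : Q.[x%:Z] - Q.[x0%:Z] = (x%:Z - x0%:Z) * q.[x%:Z].
  by have := congr1 (horner^~ x%:Z) defq; rewrite !hornerE mulrC.
apply: (@dvdz_pexp_cancel p _ D (x%:Z - x0%:Z)) => //.
- rewrite -diff (_ : k + _ + D = k + (size xs).+1 * D)%N; last by rewrite mulSn; lia.
  by apply: rpredB; apply: roots.
- by rewrite subr_eq0 eqz_nat; apply: contraNneq x0xs => <-.
- by have := small x xin; have := small x0 x0in; lia.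
Qed.

(* The truncation F of a - c is a polynomial
   having all of them as deep roots, and [deep_roots_bound] applies. *)
Lemma fiber_size_bound (p : nat) (a : nat -> nat -> nat) (c : nat -> nat)
    (k m0 M : nat) (s : seq nat) :
  prime p -> is_ZpTate p a -> (0 < m0)%N -> a m0 k != 0%N ->
  (forall m, (M <= m)%N -> a m k = 0%N) ->
  uniq s -> (forall n, n \in s -> ps_eval_is p a n c) -> (size s <= M)%N.
Proof.
move=> pp [aZp _] m0_gt0 am0 aM us ev.
have pk1 : (1 < p ^ k)%N by have [lt _] := aZp m0 k; move: am0 lt; lia.
have m0M : (m0 < M)%N by rewrite ltnNge; apply: contra am0 => /aM ->.
pose D := \max_(x <- s) x.
have small x : x \in s -> (x < p ^ D)%N.
  move=> xs; apply: leq_ltn_trans (leq_bigmax_seq _ xs isT) _.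
  exact/ltn_expl/prime_gt1.
pose L := (k + size s * D)%N.
have [M0 stable] := @eventually_all
  (fun x M' => c L = (\sum_(m < M') a m L * x ^ m) %% p ^ L)%N s (fun x xs => ev x xs L).
pose N := maxn M0 M.
pose F : {poly int} := \poly_(m < N) (a m L)%:Z - (c L)%:Z%:P.
have roots x : x \in s -> ((p ^ L)%:Z %| F.[x%:Z])%Z.
  move=> xs; rewrite hornerD hornerN hornerC horner_poly -eqz_mod_dvd.
  have -> : \sum_(m < N) (a m L)%:Z * x%:Z ^+ m = (\sum_(m < N) a m L * x ^ m)%N%:Z.
    by rewrite -[RHS]natz natr_sum; apply: eq_bigr => m _; rewrite natrM natrX !natz.
  by rewrite modz_nat (stable x xs N) ?leq_maxl // modz_nat modn_mod.
have coef_modF j : (0 < j)%N -> (poly_mod (p ^ k) F)`_j = ((j < N) * a j L)%:R.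
  move=> j0; rewrite coef_map coefB coef_poly coefC (gtn_eqF j0) subr0.
  by case: (j < N)%N; rewrite ?mul1n ?mul0n.
have coef_modF_eq0 j : (0 < j)%N -> ((poly_mod (p ^ k) F)`_j == 0) = (a j k == 0%N).
  move=> j0; rewrite coef_modF // natr_Zp_eq0 //.
  case: ltnP => jN; first by rewrite mul1n /dvdn (Zp_residue_mod (aZp j)) ?leq_addr.
  by rewrite mul0n dvdn0 aM // (leq_trans (leq_maxr M0 M) jN).
have nzF : poly_mod (p ^ k) F != 0.
  by apply: contra am0 => /eqP F0; rewrite -coef_modF_eq0 // F0 coef0.
have sizeF : (size (poly_mod (p ^ k) F) <= M)%N.
  apply/leq_sizeP => j jM; apply/eqP.
  by rewrite coef_modF_eq0 ?(leq_trans _ jM) ?aM //; apply: leq_ltn_trans m0M.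
exact: ltnW (leq_trans (deep_roots_bound pp pk1 us small roots nzF) sizeF).
Qed.

End ReductionModPrimePowers.

Theorem lemma2p1 (p r : nat) (V : ('I_r -> nat -> nat) -> Prop)
    (S : nat -> Prop) (P : 'I_r -> nat -> nat -> nat) :
  prime p -> 0 < r ->
  (forall y, V y -> is_Zp_vec p y) ->
  infinite_set S ->
  (forall k, is_ZpTate p (P k)) ->
  (forall y, is_Zp_vec p y -> ~ V y -> forall n, ~ fiber p P S y n) ->
  (forall y, V y -> finite_set (fiber p P S y)) ->
  exists N : nat, forall y, V y -> card_le (fiber p P S y) N.
Proof.
move=> pp _ _ infS PTate notV finV.
have [[i [k [m0 [m0_gt0 Pm0]]]] | all_const] :=
  classic (exists i k m0, 0 < m0 /\ P i m0 k <> 0).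
  have [M PM] := (PTate i).2 k.
  exists M => y _ s us fib; apply: (fiber_size_bound pp (PTate i) m0_gt0 _ PM us).
    exact/eqP.
  by move=> n /fib [_]; apply.
pose y0 i := P i 0.
have fib0 n : S n -> fiber p P S y0 n.
  move=> Sn; split => // i; apply: constant_series_eval; first exact: (PTate i).1.
  move=> m k m_gt0; apply: NNPP => Pmk; apply: all_const; by exists i, k, m.
have [n [_ Sn]] := infS 0.
have [Vy0 | nVy0] := classic (V y0).
  have [s fs] := finV y0 Vy0; exfalso; apply: (infinite_not_finite infS).
  by exists s => m /fib0 /fs.
by exfalso; apply: (notV y0 (fun i => (PTate i).1 0) nVy0 n (fib0 n Sn)).
Qed.
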